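(* Let $(E,\tau)$ be a convex space. Then $(E,\tau)$ is uniquely generated (in the sense that every $X\subseteq E$ has exactly one inclusion-minimal subset $B\subseteq X$ with $\tau(B)=\tau(X)$) if and only if $\tau(X)=\tau(EX(X))$ for every $X\subseteq E$, where $EX(X)=\{x\in X:\tau(X)\neq\tau(X-\{x\})\}$.
   Context: $E$ is a finite set and $\tau:2^E\to 2^E$. $(E,\tau)$ is a convex space if (C1) $Y\subseteq\tau(Y)$ for all $Y\subseteq E$, and (convexity) for all $Y_1\subseteq Y_2\subseteq Y_3\subseteq E$ with $\tau(Y_1)=\tau(Y_3)$ we have $\tau(Y_2)=\tau(Y_1)$. *)

From mathcomp Require Import all_boot.
Set Implicit Arguments. Unset Strict Implicit. Unset Printing Implicit Defensive.

Definition convex_space (E : finType) (tau : {set E} -> {set E}) : Prop :=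
  (forall Y : {set E}, Y \subset tau Y) /\
  (forall Y1 Y2 Y3 : {set E}, Y1 \subset Y2 -> Y2 \subset Y3 ->
     tau Y1 = tau Y3 -> tau Y2 = tau Y1).

Definition minimal_generator (E : finType) (tau : {set E} -> {set E})
    (X B : {set E}) : Prop :=
  B \subset X /\ tau B = tau X /\
  (forall C : {set E}, C \subset B -> tau C = tau X -> C = B).

Definition uniquely_generated (E : finType) (tau : {set E} -> {set E}) : Prop :=
  forall X : {set E}, exists! B : {set E}, minimal_generator tau X B.

Definition EX (E : finType) (tau : {set E} -> {set E}) (X : {set E}) : {set E} :=
  [set x in X | tau X != tau (X :\ x)].

From mathcomp Require Import all_boot.

Set Implicit Arguments.
Unset Strict Implicit.
Unset Printing Implicit Defensive.

(* Convexity forces every generating subset B of X to contain EX(X): if x is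
   in X but not in B, then B <= X - {x} <= X squeezes tau (X - {x}) to tau X.
   Hence if EX(X) generates X it is the unique minimal generator. Conversely,
   a point x of the unique minimal generator of X with tau (X - {x}) = tau X
   would make a minimal generator of X - {x} a second one of X. *)

Section ConvexSpace.

Variables (E : finType) (tau : {set E} -> {set E}).

Lemma EX_subset (X : {set E}) : EX tau X \subset X.
Proof. by apply/subsetP => x; rewrite inE => /andP[]. Qed.

Lemma minimal_generatorD1 (X B : {set E}) (x : E) :
  tau (X :\ x) = tau X -> minimal_generator tau (X :\ x) B ->
  minimal_generator tau X B.
Proof.
move=> eXx [sBXx [eBXx minB]]; split; first exact: subset_trans sBXx (subsetDl _ _).
split; first by rewrite eBXx eXx.
by move=> C sCB eC; apply: minB; rewrite // eC eXx.
Qed.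

Lemma minimal_generator_sub_EX (X B : {set E}) :
  uniquely_generated tau -> minimal_generator tau X B -> B \subset EX tau X.
Proof.
move=> ug genB; have [sBX _] := genB.
apply/subsetP => x xB; rewrite inE (subsetP sBX _ xB) /=; apply/eqP => /esym eXx.
have [B' [genB' _]] := ug (X :\ x).
have [B0 [_ uniqB]] := ug X.
have BB' : B = B' by rewrite -(uniqB _ genB) (uniqB _ (minimal_generatorD1 eXx genB')).
have [sB'Xx _] := genB'.
by move: (subsetP sB'Xx x); rewrite -BB' xB !inE eqxx => /(_ isT).
Qed.

Hypothesis convex : convex_space tau.

Lemma EX_sub_generating (X B : {set E}) :
  B \subset X -> tau B = tau X -> EX tau X \subset B.
Proof.
have [_ conv] := convex; move=> sBX eBX.
apply/subsetP => x; rewrite inE => /andP[xX]; apply: contraR => xB.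
have sBXx : B \subset X :\ x by rewrite subsetD1 sBX xB.
by rewrite (conv _ _ _ sBXx (subsetDl _ _) eBX) eBX.
Qed.

Lemma minimal_generator_EX (X : {set E}) :
  tau X = tau (EX tau X) -> minimal_generator tau X (EX tau X).
Proof.
move=> eX; split; first exact: EX_subset.
split=> // C sC eC; apply/eqP; rewrite eqEsubset sC.
exact: EX_sub_generating (subset_trans sC (EX_subset X)) eC.
Qed.

Lemma minimal_generator_eq_EX (X B : {set E}) :
  tau X = tau (EX tau X) -> minimal_generator tau X B -> B = EX tau X.
Proof.
move=> eX [sBX [eBX minB]]; apply/esym/minB; last by rewrite -eX.
exact: EX_sub_generating.
Qed.

End ConvexSpace.

Theorem mainTheorem15 (E : finType) (tau : {set E} -> {set E}) :
  convex_space tau ->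
  (uniquely_generated tau <-> forall X : {set E}, tau X = tau (EX tau X)).
Proof.
move=> convex; split=> [ug X | genEX X].
- have [B [genB _]] := ug X; have [sBX [eBX _]] := genB.
  suff -> : EX tau X = B by rewrite eBX.
  apply/eqP; rewrite eqEsubset (EX_sub_generating convex sBX eBX).
  exact: minimal_generator_sub_EX genB.
- exists (EX tau X); split; first exact: minimal_generator_EX.
  by move=> B /(minimal_generator_eq_EX convex (genEX X)).
Qed.
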